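(* Let $I\in\{0,1\}^{n\times m}$, $i\in X$, $j\in Y$. Then $\mathcal{E}(I)_{ij}=1$ if and only if all of the following hold: (a) $I_{ij}=1$; (b) for every $i'\in X$ with $\{i'\}^\uparrow\subsetneq\{i\}^\uparrow$ we have $I_{i'j}=0$; (c) for every $j'\in Y$ with $\{j'\}^\downarrow\subsetneq\{j\}^\downarrow$ we have $I_{ij'}=0$.
   Context: $X=\{1,\dots,n\}$, $Y=\{1,\dots,m\}$. For $C\subseteq X$, $D\subseteq Y$: $C^{\uparrow}=\{j\in Y\mid \forall i\in C: I_{ij}=1\}$, $D^{\downarrow}=\{i\in X\mid \forall j\in D: I_{ij}=1\}$ (so $\{i\}^\uparrow$ is the set of columns with a 1 in row $i$, $\{j\}^\downarrow$ the set of rows with a 1 in column $j$). $\mathcal{B}(I)=\{\langle C,D\rangle\mid C^\uparrow=D, D^\downarrow=C\}$ ordered by $\langle C_1,D_1\rangle\leq\langle C_2,D_2\rangle$ iff $C_1\subseteq C_2$; $\gamma(i)=\langle\{i\}^{\uparrow\downarrow},\{i\}^\uparrow\rangle$, $\mu(j)=\langle\{j\}^\downarrow,\{j\}^{\downarrow\uparrow}\rangle$, $\mathcal{I}_{ij}=\{c\in\mathcal{B}(I)\mid\gamma(i)\leq c\leq\mu(j)\}$. $\mathcal{E}(I)\in\{0,1\}^{n\times m}$: $\mathcal{E}(I)_{ij}=1$ iff $\mathcal{I}_{ij}$ is non-empty and minimal w.r.t. $\subseteq$ among the non-empty sets $\mathcal{I}_{i'j'}$. *)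

From mathcomp Require Import all_boot all_algebra.
Set Implicit Arguments. Unset Strict Implicit. Unset Printing Implicit Defensive.

(* A Boolean matrix I in {0,1}^{n x m}: rows X = 'I_n, columns Y = 'I_m
   (0-based indices for {1..n}, {1..m}). *)
Section FCA.
Variables (n m : nat) (I : 'M[bool]_(n, m)).

Definition up (C : {set 'I_n}) : {set 'I_m} :=
  [set j | [forall i in C, I i j]].
Definition down (D : {set 'I_m}) : {set 'I_n} :=
  [set i | [forall j in D, I i j]].

Definition is_concept (c : {set 'I_n} * {set 'I_m}) : bool :=
  (up c.1 == c.2) && (down c.2 == c.1).

Definition concept_le (c1 c2 : {set 'I_n} * {set 'I_m}) : bool :=
  c1.1 \subset c2.1.

Definition gamma (i : 'I_n) : {set 'I_n} * {set 'I_m} :=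
  (down (up [set i]), up [set i]).
Definition mu (j : 'I_m) : {set 'I_n} * {set 'I_m} :=
  (down [set j], up (down [set j])).

Definition interval (i : 'I_n) (j : 'I_m) : {set {set 'I_n} * {set 'I_m}} :=
  [set c | is_concept c && concept_le (gamma i) c && concept_le c (mu j)].

Definition E (i : 'I_n) (j : 'I_m) : bool :=
  (interval i j != set0) &&
  [forall i' : 'I_n, forall j' : 'I_m,
     (interval i' j' != set0) ==> ~~ (interval i' j' \proper interval i j)].

End FCA.

(* A concept c lies in the interval of (i, j) iff gamma(i) <= c <= mu(j), and
   gamma(i) <= mu(j) iff I i j; so the interval of (i, j) is nonempty iff
   I i j, and then it contains both gamma(i) and mu(j).  Consequently, for
   nonempty intervals, inclusion of the interval of (i', j') in that of (i, j)
   amounts to up {i'} <= up {i} and down {j'} <= down {j}, and strict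
   inclusion to strictness in one of the two coordinates.  A strictly smaller
   nonempty interval with up {i'} strictly smaller gives I i' j, which (b)
   forbids; one with down {j'} strictly smaller gives I i j', which (c)
   forbids.  Conversely, (i', j) and (i, j') are the witnesses refuting
   minimality when (b) or (c) fails. *)

From Pilot Require Import Defs.
From mathcomp Require Import all_boot all_algebra.

Section ConceptIntervals.
Variables (n m : nat) (I : 'M[bool]_(n, m)).

Lemma sub_down_up (A : {set 'I_n}) (B : {set 'I_m}) :
  (A \subset down I B) = (B \subset up I A).
Proof.
by apply/subsetP/subsetP => AB x xB; rewrite inE; apply/forallP => y;
  apply/implyP => yA; have := AB y yA; rewrite inE => /forallP/(_ x)/implyP->.
Qed.

Lemma in_up1 i j : (j \in up I [set i]) = I i j.
Proof.
rewrite inE; apply/forallP/idP => [/(_ i)|Iij x]; first by rewrite set11.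
by apply/implyP; rewrite inE => /eqP->.
Qed.

Lemma in_down1 i j : (i \in down I [set j]) = I i j.
Proof.
rewrite inE; apply/forallP/idP => [/(_ j)|Iij x]; first by rewrite set11.
by apply/implyP; rewrite inE => /eqP->.
Qed.

Lemma up_down_up (A : {set 'I_n}) : up I (down I (up I A)) = up I A.
Proof.
apply/eqP; rewrite eqEsubset -[X in _ && X]sub_down_up subxx andbT.
apply/subsetP => j jU; rewrite inE; apply/forallP => i; apply/implyP => iA.
have /subsetP/(_ i iA) : A \subset down I (up I A) by rewrite sub_down_up.
by move: jU; rewrite inE => /forallP/(_ i)/implyP.
Qed.

Lemma down_up_down (B : {set 'I_m}) : down I (up I (down I B)) = down I B.
Proof.
apply/eqP; rewrite eqEsubset [X in _ && X]sub_down_up subxx andbT.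
apply/subsetP => i iD; rewrite inE; apply/forallP => j; apply/implyP => jB.
have /subsetP/(_ j jB) : B \subset up I (down I B) by rewrite -sub_down_up.
by move: iD; rewrite inE => /forallP/(_ j)/implyP.
Qed.

Lemma gamma_is_concept i : is_concept I (gamma I i).
Proof. by rewrite /is_concept /= up_down_up !eqxx. Qed.

Lemma mu_is_concept j : is_concept I (mu I j).
Proof. by rewrite /is_concept /= down_up_down !eqxx. Qed.

Lemma gamma_le_mu i j : concept_le (gamma I i) (mu I j) = I i j.
Proof. by rewrite /concept_le sub_down_up up_down_up sub1set in_up1. Qed.

Lemma gamma_le_gamma i i' :
  concept_le (gamma I i) (gamma I i') = (up I [set i'] \subset up I [set i]).
Proof. by rewrite /concept_le sub_down_up up_down_up. Qed.

Lemma mu_le_mu j j' :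
  concept_le (mu I j') (mu I j) = (down I [set j'] \subset down I [set j]).
Proof. by []. Qed.

Lemma gamma_in_interval i j : I i j -> gamma I i \in Defs.interval I i j.
Proof.
by move=> Iij; rewrite inE gamma_is_concept gamma_le_mu Iij /concept_le subxx.
Qed.

Lemma mu_in_interval i j : I i j -> mu I j \in Defs.interval I i j.
Proof.
by move=> Iij; rewrite inE mu_is_concept gamma_le_mu Iij /concept_le subxx.
Qed.

Lemma interval_neq0 i j : (Defs.interval I i j != set0) = I i j.
Proof.
apply/idP/idP => [/set0Pn[c]|Iij]; last by apply/set0Pn; exists (gamma I i);
  exact: gamma_in_interval.
by rewrite inE -gamma_le_mu => /andP[/andP[_ gc] cm]; exact: subset_trans gc cm.
Qed.

Lemma subset_interval i j i' j' : I i' j' ->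
  (Defs.interval I i' j' \subset Defs.interval I i j) =
  (up I [set i'] \subset up I [set i]) && (down I [set j'] \subset down I [set j]).
Proof.
move=> Ii'j'; apply/idP/andP => [sub_ij | [Ui Dj]].
  have := subsetP sub_ij _ (gamma_in_interval _ _ Ii'j').
  have := subsetP sub_ij _ (mu_in_interval _ _ Ii'j').
  by rewrite !inE -gamma_le_gamma -mu_le_mu => /andP[_ ->] /andP[/andP[_ ->]].
rewrite -gamma_le_gamma in Ui; rewrite -mu_le_mu in Dj.
apply/subsetP => c; rewrite !inE => /andP[/andP[-> gc] cm].
by rewrite /concept_le (subset_trans Ui gc) (subset_trans cm Dj).
Qed.

Lemma proper_interval i j i' j' : I i j -> I i' j' ->
  (Defs.interval I i' j' \proper Defs.interval I i j) =
  (up I [set i'] \subset up I [set i]) && (down I [set j'] \subset down I [set j])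
  && ~~ ((up I [set i] \subset up I [set i']) && (down I [set j] \subset down I [set j'])).
Proof. by move=> Iij Ii'j'; rewrite properE !subset_interval. Qed.

End ConceptIntervals.

Theorem lemma2 (n m : nat) (I : 'M[bool]_(n, m)) (i : 'I_n) (j : 'I_m) :
  E I i j <->
  [/\ I i j,
      (forall i' : 'I_n, up I [set i'] \proper up I [set i] -> I i' j = false)
    & (forall j' : 'I_m, down I [set j'] \proper down I [set j] -> I i j' = false)].
Proof.
rewrite /E interval_neq0; split => [/andP[Iij /forallP minimal] | [Iij min_i min_j]].
  split=> // [i' | j']; rewrite properE => /andP[le nge];
    apply/negbTE/negP => Ix.
  - have := minimal i' => /forallP/(_ j); rewrite interval_neq0 Ix.
    by rewrite proper_interval // le subxx !andbT (negbTE nge).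
  - have := minimal i => /forallP/(_ j'); rewrite interval_neq0 Ix.
    by rewrite proper_interval // le subxx (negbTE nge).
rewrite Iij; apply/forallP => i'; apply/forallP => j'; apply/implyP.
rewrite interval_neq0 => Ii'j'; rewrite proper_interval //.
apply/negP => /andP[/andP[Ui Dj]]; rewrite negb_and => /orP[nUi | nDj].
- have := min_i i'; rewrite properE Ui nUi -in_down1 => /(_ isT).
  by rewrite (subsetP Dj) ?in_down1.
- have := min_j j'; rewrite properE Dj nDj -in_up1 => /(_ isT).
  by rewrite (subsetP Ui) ?in_up1.
Qed.
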